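(* Let $T:X\to Y$ be a disjointness preserving linear bijection between Archimedean vector lattices. Then $T$ satisfies condition $(\beta)$ if and only if $T^{-1}$ is disjointness preserving.
   Context: All vector lattices are Archimedean. For a subset $A$ of a vector lattice $X$, $A^d=\{x\in X: |x|\wedge|a|=0 \text{ for all } a\in A\}$ and $A^{dd}=(A^d)^d$. For $a,b\in X$ we write $a\lhd b$ if $\{a\}^{dd}\subseteq\{b\}^{dd}$. A linear operator $S$ satisfies condition $(\beta)$ if $Sa\lhd Sb$ whenever $a\lhd b$. A linear operator is disjointness preserving if it maps disjoint elements to disjoint elements. *)

From mathcomp Require Import all_boot all_order all_algebra.
From mathcomp Require Import reals.
Set Implicit Arguments. Unset Strict Implicit. Unset Printing Implicit Defensive.
Import GRing.Theory Num.Theory.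
Local Open Scope ring_scope.

Section VL.
Variables (R : realType) (X : lmodType R) (le : X -> X -> Prop).

Definition is_sup (x y s : X) : Prop :=
  le x s /\ le y s /\ forall u, le x u -> le y u -> le s u.

Definition is_inf (x y i : X) : Prop :=
  le i x /\ le i y /\ forall u, le u x -> le u y -> le u i.

Definition archimedean_vector_lattice : Prop :=
  (forall x, le x x) /\
  (forall x y, le x y -> le y x -> x = y) /\
  (forall x y z, le x y -> le y z -> le x z) /\
  (forall x y z, le x y -> le (x + z) (y + z)) /\
  (forall (a : R) x, 0 <= a -> le 0 x -> le 0 (a *: x)) /\
  (forall x y, exists s, is_sup x y s) /\
  (forall x y, le 0 x -> (forall n : nat, le (x *+ n) y) -> x = 0).

Definition is_abs (x a : X) : Prop := is_sup x (- x) a.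

Definition disjoint (x y : X) : Prop :=
  exists ax ay, is_abs x ax /\ is_abs y ay /\ is_inf ax ay 0.

Definition dcompl (A : X -> Prop) : X -> Prop :=
  fun x => forall a, A a -> disjoint x a.

Definition ddcompl (A : X -> Prop) : X -> Prop := dcompl (dcompl A).

Definition lhd (a b : X) : Prop :=
  forall x, ddcompl (fun z => z = a) x -> ddcompl (fun z => z = b) x.

End VL.

Definition disjointness_preserving (R : realType) (X Y : lmodType R)
  (leX : X -> X -> Prop) (leY : Y -> Y -> Prop) (S : X -> Y) : Prop :=
  forall x y, disjoint leX x y -> disjoint leY (S x) (S y).

Definition cond_beta (R : realType) (X Y : lmodType R)
  (leX : X -> X -> Prop) (leY : Y -> Y -> Prop) (S : X -> Y) : Prop :=
  forall a b, lhd leX a b -> lhd leY (S a) (S b).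

From Pilot Require Import Defs.
From mathcomp Require Import all_boot all_order all_algebra.
From mathcomp Require Import reals.
Set Implicit Arguments. Unset Strict Implicit. Unset Printing Implicit Defensive.
Import GRing.Theory Num.Theory.
Local Open Scope ring_scope.

(* If T^-1 preserves disjointness, then T and T^-1 are mutually inverse
   disjointness isomorphisms, so T maps {a}^dd onto {Ta}^dd and (beta) is
   immediate.  Conversely, given u ⊥ v put x = T^-1 u, y = T^-1 v and
   z = |x| ∧ |y|.  As 0 <= z <= |x|, |y| we get z ◁ x and z ◁ y, hence
   Tz ◁ u and Tz ◁ v by (beta).  An element lying in both {u}^dd and {v}^dd
   with u ⊥ v is disjoint from itself, so Tz = 0, z = 0 and x ⊥ y. *)

Section VectorLattice.
Variables (R : realType) (X : lmodType R) (le : X -> X -> Prop).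
Hypothesis hX : archimedean_vector_lattice le.

Let le_refl x : le x x.
Proof. by case: hX. Qed.
Let le_anti x y : le x y -> le y x -> x = y.
Proof. by case: hX => _ [+ _]; apply. Qed.
Let le_trans x y z : le x y -> le y z -> le x z.
Proof. by case: hX => _ [_ [+ _]]; apply. Qed.
Let lerD2r z x y : le x y -> le (x + z) (y + z).
Proof. by case: hX => _ [_ [_ [+ _]]]; apply. Qed.
Let scaler_ge0 (a : R) x : 0 <= a -> le 0 x -> le 0 (a *: x).
Proof. by case: hX => _ [_ [_ [_ [+ _]]]]; apply. Qed.
Lemma is_sup_exists x y : exists s, is_sup le x y s.
Proof. by case: hX => _ [_ [_ [_ [_ [+ _]]]]]; apply. Qed.

Lemma lerN2 x y : le x y -> le (- y) (- x).
Proof.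
move=> /(lerD2r (- x - y)).
by rewrite addrA subrr add0r addrC -addrA addNr addr0.
Qed.

Lemma is_inf_exists x y : exists i, is_inf le x y i.
Proof.
have [s [sx [sy s_least]]] := is_sup_exists (- x) (- y).
exists (- s); split; [|split].
- by rewrite -[x]opprK; apply: lerN2.
- by rewrite -[y]opprK; apply: lerN2.
- by move=> u ux uy; rewrite -[u]opprK; apply/lerN2/s_least; apply: lerN2.
Qed.

Lemma is_sup_uniq x y s s' : is_sup le x y s -> is_sup le x y s' -> s = s'.
Proof. by move=> [sx [sy s_le]] [s'x [s'y s'_le]]; apply: le_anti; auto. Qed.

Lemma is_abs_ge0 x a : is_abs le x a -> le 0 a.
Proof.
move=> [xa [Nxa _]].
have a2_ge0 : le 0 (a + a).
  apply: (le_trans (y := x + a)); first by have := lerD2r x Nxa; rewrite addNr addrC.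
  by have := lerD2r a xa; rewrite [a + a]addrC.
have := scaler_ge0 (a := 2^-1) _ a2_ge0.
rewrite -mulr2n -scaler_nat scalerA mulVf ?scale1r ?pnatr_eq0 //.
by apply; rewrite invr_ge0 ler0n.
Qed.

Lemma is_abs_id_ge0 z : le 0 z -> is_abs le z z.
Proof.
move=> z_ge0; split; first exact: le_refl.
split=> [|//]; apply: (le_trans (y := 0)) => //.
by rewrite -oppr0; apply: lerN2.
Qed.

Lemma disjoint_sym x y : Defs.disjoint le x y -> Defs.disjoint le y x.
Proof.
move=> [ax [ay [hax [hay [axy0 [ayx0 inf_le]]]]]].
by exists ay, ax; do !split => //; move=> u uy ux; apply: inf_le.
Qed.

Lemma disjoint_self_eq0 x : Defs.disjoint le x x -> x = 0.
Proof.
move=> [a [a' [ha [ha' [a0 [_ inf_le]]]]]].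
rewrite -(is_sup_uniq ha ha') in inf_le.
have a_eq0 : a = 0 by apply: le_anti => //; apply: inf_le; apply: le_refl.
move: ha; rewrite a_eq0 => -[x_le0 [Nx_le0 _]]; apply: le_anti => //.
by have := lerD2r x Nx_le0; rewrite addNr add0r.
Qed.

Lemma ddcompl1_self a : ddcompl le (fun z => z = a) a.
Proof. by move=> u hu; apply/disjoint_sym/hu. Qed.

Lemma lhd_of_dcompl_sub a b :
  (forall w, Defs.disjoint le w b -> Defs.disjoint le w a) -> lhd le a b.
Proof. by move=> dba x hx w hw; apply: hx => _ ->; apply/dba/hw. Qed.

Lemma lhd_of_le_abs z t ta : le 0 z -> is_abs le t ta -> le z ta -> lhd le z t.
Proof.
move=> z_ge0 hta z_le; apply: lhd_of_dcompl_sub => w [aw [ta' [haw [hta' inf_w]]]].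
rewrite (is_sup_uniq hta' hta) in inf_w.
case: inf_w => aw_ge0 [_ inf_le]; exists aw, z; split=> //.
split; first exact: is_abs_id_ge0.
by split=> //; split=> // q qw qz; apply: inf_le => //; apply: le_trans qz z_le.
Qed.

Lemma lhd_disjoint_eq0 c u v :
  Defs.disjoint le u v -> lhd le c u -> lhd le c v -> c = 0.
Proof.
move=> duv cu cv; apply: disjoint_self_eq0.
have c_dd_u := cu _ (@ddcompl1_self c).
have cv_d : Defs.disjoint le c v by apply: c_dd_u => _ ->; apply: disjoint_sym.
by apply: (cv _ (@ddcompl1_self c)) => _ ->; exact: cv_d.
Qed.

Lemma lhd_inf_abs x y ax ay z :
  is_abs le x ax -> is_abs le y ay -> is_inf le ax ay z ->
  lhd le z x /\ lhd le z y.
Proof.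
move=> hax hay [zx [zy z_great]].
have z_ge0 : le 0 z by apply: z_great; [exact: is_abs_ge0 hax | exact: is_abs_ge0 hay].
by split; [exact: lhd_of_le_abs z_ge0 hax zx | exact: lhd_of_le_abs z_ge0 hay zy].
Qed.

End VectorLattice.

Section Inverse.
Variables (R : realType) (X Y : lmodType R).
Variables (leX : X -> X -> Prop) (leY : Y -> Y -> Prop).
Variables (S : X -> Y) (S' : Y -> X).
Hypotheses (SK : cancel S S') (S'K : cancel S' S).
Hypotheses (dpS : disjointness_preserving leX leY S)
           (dpS' : disjointness_preserving leY leX S').

Lemma ddcompl1_map a x :
  ddcompl leX (fun z => z = a) x -> ddcompl leY (fun z => z = S a) (S x).
Proof.
move=> hx w hw; rewrite -(S'K w); apply/dpS/hx => _ ->.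
by rewrite -(SK a); apply/dpS'/hw.
Qed.

End Inverse.

Lemma cond_beta_of_inverse_dp (R : realType) (X Y : lmodType R)
    (leX : X -> X -> Prop) (leY : Y -> Y -> Prop) (S : X -> Y) (S' : Y -> X) :
  cancel S S' -> cancel S' S ->
  disjointness_preserving leX leY S -> disjointness_preserving leY leX S' ->
  cond_beta leX leY S.
Proof.
move=> SK S'K dpS dpS' a b hab y hy; rewrite -(S'K y).
apply: (ddcompl1_map SK S'K dpS dpS'); apply: hab.
by rewrite -(SK a); apply: (ddcompl1_map S'K SK dpS' dpS).
Qed.

Theorem proposition3p6 (R : realType) (X Y : lmodType R)
  (leX : X -> X -> Prop) (leY : Y -> Y -> Prop)
  (hX : archimedean_vector_lattice leX) (hY : archimedean_vector_lattice leY)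
  (T : {linear X -> Y}) (hTb : bijective T)
  (hTdp : disjointness_preserving leX leY T) :
  cond_beta leX leY T <->
  (forall Tinv : Y -> X, cancel T Tinv -> cancel Tinv T ->
     disjointness_preserving leY leX Tinv).
Proof.
split=> [beta Tinv TK TinvK u v duv | dpTinv].
- have [ax hax] := is_sup_exists hX (Tinv u) (- Tinv u).
  have [ay hay] := is_sup_exists hX (Tinv v) (- Tinv v).
  have [z hz] := is_inf_exists hX ax ay.
  have [zu zv] := lhd_inf_abs hX hax hay hz.
  have Tz0 : T z = 0.
    by apply: (lhd_disjoint_eq0 hY duv); [rewrite -[u]TinvK | rewrite -[v]TinvK]; exact: beta.
  have z0 : z = 0 by rewrite -(TK z) Tz0 -(linear0 T) TK.
  by exists ax, ay; rewrite -z0.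
- have [Tinv TK TinvK] := hTb.
  exact: cond_beta_of_inverse_dp TK TinvK hTdp (dpTinv Tinv TK TinvK).
Qed.
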